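(* Let $b\in L^1(\mathbb{R}_+)$, $\lambda>0$, and let $\varphi$ be the solution of $\varphi''-\lambda^2\tilde m^2(t)\varphi=0$ on $[0,\infty)$ described in the context. Set $\nu(t)=-\varphi'(t)/\varphi(t)$. Then there exists $\delta_2\in(0,1)$ such that $\lambda\delta_2\le\nu(t)\le\lambda/\delta_2$ for all $t\ge0$.
   Context: $m(t)=e^{\int_0^tb(\tau)d\tau}$, $h(t)=\int_0^t\frac{d\tau}{m(\tau)}$, $\eta=h^{-1}$ (inverse function), $\tilde m(t)=m(\eta(t))$, $k=\exp(\int_0^\infty b(\tau)d\tau)$. $\varphi$ is the solution of $\varphi''=\lambda^2\tilde m^2\varphi$ for which there exists $t_0\ge0$ such that $(\varphi(t),\varphi'(t))=\big(1+o(1),\,-\lambda k+o(1)\big)e^{-\lambda\int_{t_0}^t\tilde m(\tau)d\tau}$ as $t\to\infty$. *)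

From HB Require Import structures.
From mathcomp Require Import all_boot all_order all_algebra.
From mathcomp Require Import all_classical all_reals all_analysis.
Set Implicit Arguments. Unset Strict Implicit. Unset Printing Implicit Defensive.
Import Order.TTheory GRing.Theory Num.Theory.
Import numFieldNormedType.Exports.
Local Open Scope classical_set_scope.
Local Open Scope ring_scope.

Section defs.
Variable R : realType.
Notation mu := (@lebesgue_measure R).

Definition mfun (b : R -> R) (t : R) : R :=
  expR (\int[mu]_(x in `[0, t]) b x).

Definition hfun (b : R -> R) (t : R) : R :=
  \int[mu]_(x in `[0, t]) (mfun b x)^-1.

(* eta = h^{-1} on [0, +oo): the t >= 0 with h t = s *)
Definition etafun (b : R -> R) (s : R) : R :=
  xget 0 [set t | 0 <= t /\ hfun b t = s].

Definition mtilde (b : R -> R) (t : R) : R := mfun b (etafun b t).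

Definition kconst (b : R -> R) : R :=
  expR (\int[mu]_(x in `[0, +oo[) b x).
End defs.

From HB Require Import structures.
From mathcomp Require Import all_boot all_order all_algebra.
From mathcomp Require Import all_classical all_reals all_analysis.
From mathcomp Require Import ring lra.
Set Implicit Arguments.
Unset Strict Implicit.
Unset Printing Implicit Defensive.

Import Order.TTheory GRing.Theory Num.Theory.
Import numFieldNormedType.Exports.
Local Open Scope classical_set_scope.
Local Open Scope ring_scope.

(* Since phi'' = q phi with q >= 0, (phi phi')' = phi'^2 + q phi^2 >= 0, so
   phi phi' is nondecreasing.  The asymptotics at +oo give phi > 0 > phi' far
   out, hence phi phi' < 0 on the whole half-line: phi never vanishes, so it
   stays positive, and nu = - phi' / phi is continuous and positive on
   [0, +oo) with the positive limit lam k at +oo.  Hence nu lies between two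
   positive constants, and delta2 is chosen to fit both of them. *)

Lemma lt0_ndecr_near_pinfty (R : realType) (a : R) (g : R -> R) :
  (forall x y, a <= x -> x <= y -> g x <= g y) ->
  (\forall t \near +oo, g t < 0) -> forall t, a <= t -> g t < 0.
Proof.
move=> g_ndecr [M [_ gM]] t at_.
have tT : t <= Num.max t (M + 1) by rewrite le_max lexx.
apply: le_lt_trans (g_ndecr _ _ at_ tT) (gM _ _).
by rewrite lt_max ltrDl ltr01 orbT.
Qed.

Lemma cvg_ratio_rescaled (R : realType) (f g E : R -> R) (l : R) :
  (forall t, E t != 0) ->
  (fun t => f t * E t) @ +oo --> (1 : R) ->
  (fun t => g t * E t) @ +oo --> l ->
  (fun t => g t / f t) @ +oo --> l.
Proof.
move=> E_neq0 fE gE.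
have -> : (fun t => g t / f t) = (fun t => g t * E t * (f t * E t)^-1).
  by apply/funext => t; rewrite invfM mulrACA divff // mulr1.
by rewrite -[l]mulr1 -[X in l * X]invr1; apply: cvgM => //; apply: cvgV.
Qed.

Lemma gt0_continuous_neq0 (R : realType) (a : R) (f : R -> R) :
  {within `[a, +oo[, continuous f} ->
  (forall t, a <= t -> f t != 0) ->
  (\forall t \near +oo, 0 < f t) -> forall t, a <= t -> 0 < f t.
Proof.
move=> f_cont f_neq0 [M [_ fM]] t at_.
set T := Num.max t (M + 1).
have tT : t <= T by rewrite le_max lexx.
have fT : 0 < f T by apply: fM; rewrite lt_max ltrDl ltr01 orbT.
rewrite lt_neqAle eq_sym f_neq0 //= leNgt; apply/negP => ft.
have sub : `[t, T] `<=` `[a, +oo[.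
  by move=> x; rewrite /= !in_itv /= andbT => /andP[/(le_trans at_)].
have [|c] := IVT tT (continuous_subspaceW sub f_cont) (v := 0).
  by rewrite ge_min le_max (ltW ft) (ltW fT) orbT.
rewrite in_itv /= => /andP[tc _]; apply/eqP.
exact: f_neq0 (le_trans at_ tc).
Qed.

Lemma within_continuous_div (R : realType) (A : set R) (f g : R -> R) :
  {within A, continuous g} -> {within A, continuous f} ->
  (forall t, A t -> f t != 0) -> {within A, continuous (fun t => g t / f t)}.
Proof.
move=> g_cont f_cont f_neq0; rewrite continuous_subspace_in => x /set_mem Ax.
apply: (@continuousM R (subspace A) g (fun t => (f t)^-1) x); first exact: g_cont.
by apply: continuousV; [exact: f_neq0 | exact: f_cont].
Qed.

Lemma bounded_cvg_gt0 (R : realType) (a c : R) (u : R -> R) :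
  {within `[a, +oo[, continuous u} -> (forall t, a <= t -> 0 < u t) ->
  0 < c -> u @ +oo --> c ->
  exists lo hi, 0 < lo /\ forall t, a <= t -> lo <= u t <= hi.
Proof.
move=> u_cont u_gt0 c_gt0 u_cvg.
have [M [_ uM]] : \forall t \near +oo, c / 2 < u t < 2 * c.
  near=> t; apply/andP; split; near: t.
    by apply: cvgr_gt u_cvg _ _; rewrite ltr_pdivrMr // ltr_pMr // ltr1n.
  by apply: cvgr_lt u_cvg _ _; rewrite ltr_pMl // ltr1n.
set T := Num.max a (M + 1).
have aT : a <= T by rewrite le_max lexx.
have sub : `[a, T] `<=` `[a, +oo[.
  by move=> x; rewrite /= !in_itv /= andbT => /andP[].
have u_contT := continuous_subspaceW sub u_cont.
have [t1 t1_in u_min] := EVT_min aT u_contT.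
have [t2 _ u_max] := EVT_max aT u_contT.
exists (Num.min (u t1) (c / 2)), (Num.max (u t2) (2 * c)); split.
  rewrite lt_min divr_gt0 // andbT u_gt0 //.
  by move: t1_in; rewrite in_itv /= => /andP[].
move=> t at_; have [tT|Tt] := leP t T.
  have t_in : t \in `[a, T] by rewrite in_itv /= at_.
  by rewrite ge_min le_max u_min // u_max.
have /andP[lo_t t_hi] : c / 2 < u t < 2 * c.
  by apply: uM; apply: (le_lt_trans _ Tt); rewrite le_max lerDl ler01 orbT.
by rewrite ge_min le_max (ltW lo_t) (ltW t_hi) !orbT.
Unshelve. all: by end_near.
Qed.

Lemma exists_scale_bounds (R : realType) (lam lo hi : R) :
  0 < lam -> 0 < lo -> lo <= hi ->
  exists2 d, 0 < d < 1 & lam * d <= lo /\ hi <= lam / d.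
Proof.
move=> lam_gt0 lo_gt0 lo_hi; have hi_gt0 := lt_le_trans lo_gt0 lo_hi.
set d := Num.min (1 / 2) (Num.min (lo / lam) (lam / hi)).
have d_gt0 : 0 < d by rewrite !lt_min !divr_gt0.
have [d_half d_lo d_hi] : [/\ d <= 1 / 2, d <= lo / lam & d <= lam / hi].
  by split; rewrite !ge_min lexx ?orbT.
exists d; first by apply/andP; split => //; lra.
split; first by rewrite mulrC -ler_pdivlMr.
by rewrite ler_pdivlMr // mulrC -ler_pdivlMr.
Qed.

Section second_order_linear_ode.
Variables (R : realType) (a : R) (q f df : R -> R).
Hypothesis q_ge0 : forall t, a < t -> 0 <= q t.
Hypothesis f_deriv : forall t, a < t -> is_derive t 1 f (df t).
Hypothesis df_deriv : forall t, a < t -> is_derive t 1 df (q t * f t).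
Hypothesis f_cont : {within `[a, +oo[, continuous f}.
Hypothesis df_cont : {within `[a, +oo[, continuous df}.
Variable c : R.
Hypothesis c_gt0 : 0 < c.
Hypothesis f_near_gt0 : \forall t \near +oo, 0 < f t.
Hypothesis logderiv_cvg : (fun t => - df t / f t) @ +oo --> c.

Lemma mul_deriv_ndecr x y : a <= x -> x <= y -> f x * df x <= f y * df y.
Proof.
have mul_deriv t : a < t -> is_derive t 1 (f * df) (df t ^+ 2 + q t * f t ^+ 2).
  move=> at_; have := is_deriveM (f_deriv at_) (df_deriv at_).
  by congr is_derive; rewrite /GRing.scale /=; ring.
apply: (@ger0_derive1_ndecry _ (f * df)).
- by move=> t; rewrite in_itv /= andbT => /mul_deriv[].
- move=> t; rewrite in_itv /= andbT => at_.
  rewrite derive1E; have [_ ->] := mul_deriv _ at_.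
  by rewrite addr_ge0 ?sqr_ge0 // mulr_ge0 ?sqr_ge0 // q_ge0.
- by move=> t; apply: continuousM; [exact: f_cont | exact: df_cont].
Qed.

Lemma mul_deriv_lt0 t : a <= t -> f t * df t < 0.
Proof.
apply: lt0_ndecr_near_pinfty mul_deriv_ndecr _ t.
near=> t; have f_t_gt0 : 0 < f t by near: t.
rewrite pmulr_rlt0 // -oppr_gt0 -(pmulr_lgt0 _ (_ : 0 < (f t)^-1)).
  by near: t; apply: cvgr_gt logderiv_cvg _ c_gt0.
by rewrite invr_gt0.
Unshelve. all: by end_near.
Qed.

Lemma solution_gt0 t : a <= t -> 0 < f t.
Proof.
apply: gt0_continuous_neq0 f_cont _ f_near_gt0 t => {}t /mul_deriv_lt0.
by apply: contraTneq => ->; rewrite mul0r ltxx.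
Qed.

Lemma logderiv_gt0 t : a <= t -> 0 < - df t / f t.
Proof.
move=> at_; rewrite divr_gt0 ?solution_gt0 // oppr_gt0.
by rewrite -(pmulr_rlt0 _ (solution_gt0 at_)) mul_deriv_lt0.
Qed.

Lemma logderiv_bounded :
  exists lo hi, 0 < lo /\ forall t, a <= t -> lo <= - df t / f t <= hi.
Proof.
apply: bounded_cvg_gt0 _ logderiv_gt0 c_gt0 logderiv_cvg.
apply: within_continuous_div => [x|x|t]; first by apply: continuousN; exact: df_cont.
  exact: f_cont.
by rewrite /= in_itv /= andbT => /solution_gt0/lt0r_neq0.
Qed.

End second_order_linear_ode.

Theorem lemma3p2 (R : realType) (b : R -> R) (lam : R) (phi dphi : R -> R) :
  (@lebesgue_measure R).-integrable `[0, +oo[ (EFin \o b) ->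
  0 < lam ->
  (* phi solves phi'' = lam^2 mtilde^2 phi on [0,oo), with dphi = phi' *)
  (forall t : R, 0 < t -> is_derive t 1 phi (dphi t)) ->
  (forall t : R, 0 < t ->
     is_derive t 1 dphi (lam ^+ 2 * (mtilde b t) ^+ 2 * phi t)) ->
  {within `[0, +oo[, continuous phi} ->
  {within `[0, +oo[, continuous dphi} ->
  (* asymptotics at +oo *)
  (exists t0 : R, 0 <= t0 /\
     ((fun t : R => phi t * expR (lam * \int[@lebesgue_measure R]_(x in `[t0, t]) mtilde b x))
       @ +oo --> (1 : R)) /\
     ((fun t : R => dphi t * expR (lam * \int[@lebesgue_measure R]_(x in `[t0, t]) mtilde b x))
       @ +oo --> - lam * kconst b)) ->
  exists delta2 : R, 0 < delta2 < 1 /\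
    forall t : R, 0 <= t ->
      lam * delta2 <= - dphi t / phi t /\ - dphi t / phi t <= lam / delta2.
Proof.
move=> _ lam_gt0 phi_deriv dphi_deriv phi_cont dphi_cont [t0 [_ [phiE dphiE]]].
pose E t := expR (lam * \int[@lebesgue_measure R]_(x in `[t0, t]) mtilde b x).
change ((fun t => phi t * E t) @ +oo --> (1 : R)) in phiE.
change ((fun t => dphi t * E t) @ +oo --> - lam * kconst b) in dphiE.
have E_gt0 t : 0 < E t by exact: expR_gt0.
have k_gt0 : 0 < lam * kconst b by rewrite mulr_gt0 // expR_gt0.
set nu := fun t => - dphi t / phi t.
have nu_cvg : nu @ +oo --> lam * kconst b.
  have -> : nu = - (fun t => dphi t / phi t).
    by apply/funext => t; rewrite /nu /= mulNr.
  have -> : lam * kconst b = - (- lam * kconst b) by rewrite mulNr opprK.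
  by apply: cvgN; apply: cvg_ratio_rescaled phiE dphiE => t; rewrite gt_eqF.
have phi_near_gt0 : \forall t \near +oo, 0 < phi t.
  near=> t; rewrite -(pmulr_lgt0 _ (E_gt0 t)).
  by near: t; apply: cvgr_gt phiE _ ltr01.
have coeff_ge0 t : 0 < t -> 0 <= lam ^+ 2 * mtilde b t ^+ 2 by rewrite mulr_ge0 ?sqr_ge0.
have [lo [hi [lo_gt0 nu_bnd]]] := logderiv_bounded coeff_ge0 phi_deriv dphi_deriv
  phi_cont dphi_cont k_gt0 phi_near_gt0 nu_cvg.
have lo_hi : lo <= hi by have /andP[] := nu_bnd 0 (lexx 0); apply: le_trans.
have [d d01 [d_lo d_hi]] := exists_scale_bounds lam_gt0 lo_gt0 lo_hi.
exists d; split => // t t_ge0; have /andP[lo_nu nu_hi] := nu_bnd t t_ge0.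
by split; [exact: le_trans d_lo lo_nu | exact: le_trans nu_hi d_hi].
Unshelve. all: by end_near.
Qed.
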